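(* Let $\Phi$ be a real, additive gain graph on $\{1,\dots,n\}$ with edge set $E$ and let $\mathbf{Q}\in(\mathbb{E}^d)^n$. If $\mathbf{Q}$ has ideal general position and, for every edge set $S\subseteq E$ that is a forest with $d+1$ edges, $\bigcap_{e\in S}h(e)=\emptyset$ in $\mathcal{H}(\Phi;\mathbf{Q})$, then $\mathbf{Q}$ has general position with respect to $\Phi$.
   Context: A real, additive gain graph $\Phi$ on $V=\{1,\dots,n\}$: finite graph with edge set $E$ (multiple edges allowed, every edge with two distinct endpoints) and gains $\phi(e;i,j)\in\mathbb{R}$ with $\phi(e;j,i)=-\phi(e;i,j)$. $S\subseteq E$ is balanced if every circle in $S$ has gain sum $0$ (read consistently); a forest is an edge set containing no circle; $c(S)$ counts components of $(V,S)$, isolated vertices included. With $\psi_{ij}(P)=d(P,Q_i)^2-d(P,Q_j)^2$, $\mathcal{H}(\Phi;\mathbf{Q})$ consists of the hyperplanes $h(e)=\{P:\psi_{ij}(P)=\phi(e;i,j)\}$ for edges $e$ with endpoints $i,j$. $\mathcal{L}(\mathcal{H})$: nonempty intersections of subsets of $\mathcal{H}$ (including $\mathbb{E}^d$) ordered by reverse inclusion; $E(s)=\{e:h(e)\supseteq s\}$. Ideal general position: the points are distinct and, with $\mathbb{E}^d\subset\mathbb{P}^d$, $h_\infty$ the ideal hyperplane and $p_{ij}$ the ideal point of line $Q_iQ_j$, for every set $T$ of unordered pairs the projective span of $\{p_{ij}:\{i,j\}\in T\}$ has dimension $\min(n-c(T),d)-1$, $c(T)$ being the number of components of $(\{1,\dots,n\},T)$.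 A balanced flat is a balanced $S\subseteq E$ such that every $e\notin S$ with both endpoints in one component of $(V,S)$ makes $S\cup\{e\}$ unbalanced; rank $n-c(S)$. General position with respect to $\Phi$: $s\mapsto E(s)$ is a poset isomorphism from $\mathcal{L}(\mathcal{H}(\Phi;\mathbf{Q}))$ onto the poset (by inclusion) of balanced flats of rank at most $d$. *)

From HB Require Import structures.
From mathcomp Require Import all_boot all_order all_algebra.
From mathcomp Require Import boolp reals.
Set Implicit Arguments. Unset Strict Implicit. Unset Printing Implicit Defensive.
Import Order.TTheory GRing.Theory Num.Theory.
Local Open Scope ring_scope.

Section GainGraph.
Variables (R : realType) (n d : nat) (E : finType)
          (src dst : E -> 'I_n) (phi : E -> R).
(* An edge e has endpoints src e, dst e and gain phi(e; src e, dst e) = phi e;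
   phi(e; dst e, src e) = - phi e. *)

(* A dart: an edge together with an orientation (true = src -> dst). *)
Definition dtail (a : E * bool) : 'I_n := if a.2 then src a.1 else dst a.1.
Definition dhead (a : E * bool) : 'I_n := if a.2 then dst a.1 else src a.1.
Definition dgain (a : E * bool) : R := if a.2 then phi a.1 else - phi a.1.

Definition circle (S : {set E}) (c : seq (E * bool)) : Prop :=
  [/\ (2 <= size c)%N, uniq (map fst c), {subset map fst c <= S},
      uniq (map dtail c) & cycle (fun a b => dhead a == dtail b) c].

Definition balanced (S : {set E}) : Prop :=
  forall c, circle S c -> \sum_(a <- c) dgain a = 0.

Definition forest (S : {set E}) : Prop := forall c, ~ circle S c.

Definition adjE (S : {set E}) : rel 'I_n :=
  fun i j => [exists e in S, ((src e == i) && (dst e == j))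
                          || ((src e == j) && (dst e == i))].
Definition ncompE (S : {set E}) : nat := n_comp (adjE S) predT.
Definition rankE (S : {set E}) : nat := (n - ncompE S)%N.

Definition balanced_flat (F : {set E}) : Prop :=
  balanced F /\
  forall e, e \notin F -> connect (adjE F) (src e) (dst e) ->
    ~ balanced (e |: F).

Variable Q : 'I_n -> 'rV[R]_d.

Definition sqdist (P X : 'rV[R]_d) : R := \sum_(k < d) (P 0 k - X 0 k) ^+ 2.
Definition psi (i j : 'I_n) (P : 'rV[R]_d) : R := sqdist P (Q i) - sqdist P (Q j).

Definition hyp (e : E) (P : 'rV[R]_d) : Prop := psi (src e) (dst e) P = phi e.

Definition inter (A : {set E}) (P : 'rV[R]_d) : Prop :=
  forall e, e \in A -> hyp e P.

Definition inL (s : 'rV[R]_d -> Prop) : Prop :=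
  (exists P, s P) /\ exists A : {set E}, forall P, s P <-> inter A P.

Definition Eof (s : 'rV[R]_d -> Prop) : {set E} :=
  [set e | `[< forall P, s P -> hyp e P >]].

(* s |-> E(s) is a poset isomorphism from L(H) (reverse inclusion) onto the
   balanced flats of rank <= d (inclusion). *)
Definition general_position : Prop :=
  [/\ (forall s, inL s -> balanced_flat (Eof s) /\ (rankE (Eof s) <= d)%N),
      (forall F, balanced_flat F -> (rankE F <= d)%N ->
         exists s, inL s /\ Eof s = F) &
      (forall s t, inL s -> inL t ->
         ((forall P, t P -> s P) <-> Eof s \subset Eof t))].

End GainGraph.

Section Ideal.
Variables (R : realType) (n d : nat) (Q : 'I_n -> 'rV[R]_d).

(* T : a set of unordered pairs {i,j}, encoded as pairs (i,j) with i < j *)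
Definition ncompT (T : {set 'I_n * 'I_n}) : nat :=
  n_comp (fun i j => ((i, j) \in T) || ((j, i) \in T)) predT.

(* The ideal point p_ij of line Q_iQ_j is the direction Q_j - Q_i; the
   projective span of a set of ideal points has dimension (rank of the
   linear span of the directions) - 1. *)
Definition ideal_general_position : Prop :=
  injective Q /\
  forall T : {set 'I_n * 'I_n}, (forall p, p \in T -> p.1 < p.2)%N ->
    \rank (\sum_(p in T) <<Q p.2 - Q p.1>>)%MS = minn (n - ncompT T) d.

End Ideal.

From Pilot Require Import Defs.
From HB Require Import structures.
From mathcomp Require Import all_boot all_order all_algebra.
From mathcomp Require Import boolp reals.
From mathcomp Require Import zify ring.
Import Order.TTheory GRing.Theory Num.Theory.
Local Open Scope ring_scope.
Set Implicit Arguments. Unset Strict Implicit. Unset Printing Implicit Defensive.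

(* On a point P common to the hyperplanes of an edge set, the gain of an edge
   from i to j equals f i - f j with f k = |P - Q_k|^2, so gains telescope to 0
   around circles: E(s) is balanced, and it is closed because a circle through
   e and E(s) forces every point of s onto h(e).  Conversely psi_ij is affine
   with linear part 2 <P, Q_j - Q_i>, and ideal general position makes these
   directions independent along a forest of at most d edges, so the hyperplanes
   of such a forest meet for any prescribed gains.  For a balanced flat F of rank
   at most d a spanning forest then gives a point of the intersection of F; an
   edge e outside F containing this intersection must join two components of F,
   and adding it to the spanning forest gives either a forest of at most d edges,
   whose gain on e can be perturbed, or one of d + 1 edges whose hyperplanes
   meet, which is excluded. *)

Lemma finset_ind (T : finType) (P : {set T} -> Prop) :
  P set0 -> (forall (x : T) (A : {set T}), x \notin A -> P A -> P (x |: A)) ->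
  forall A, P A.
Proof.
move=> P0 PU A; elim: {A}_.+1 {-2}A (ltnSn #|A|) => // k IHk A.
have [-> //|[x xA]] := set_0Vmem A; rewrite (cardsD1 x) xA ltnS => ltAk.
by rewrite -(setD1K xA); apply: PU (IHk _ ltAk); rewrite setD11.
Qed.

Lemma exists_subset_card (T : finType) (A : {set T}) k : (k <= #|A|)%N ->
  exists B : {set T}, B \subset A /\ #|B| = k.
Proof.
move=> kA; exists [set x in take k (enum A)]; split.
  by apply/subsetP => x; rewrite inE => /mem_take; rewrite mem_enum.
by rewrite cardsE (card_uniqP _) ?take_uniq ?enum_uniq // size_takel -?cardE.
Qed.

Section Graph.
Variables (n : nat) (E : finType) (src dst : E -> 'I_n).
Hypothesis loopless : forall e, src e != dst e.

Implicit Types (S F : {set E}) (e : E) (a : E * bool).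
Local Notation adj := (adjE src dst).
Local Notation dtail := (dtail src dst).
Local Notation dhead := (dhead src dst).
Local Notation forest := (forest src dst).
Local Notation ncomp := (ncompE src dst).
Local Notation darts_link := (fun a b : E * bool => dhead a == dtail b).

Lemma adjE_sym S : symmetric (adj S).
Proof. by move=> i j; apply/existsP/existsP => -[e He]; exists e; rewrite orbC. Qed.

Lemma connect_adjE_sym S : connect_sym (adj S).
Proof. exact/sym_connect_sym/adjE_sym. Qed.

Lemma adjE_subset S F : S \subset F -> subrel (adj S) (adj F).
Proof.
move=> /subsetP sSF x y /existsP[e /andP[eS He]]; apply/existsP; exists e.
by rewrite sSF.
Qed.

Lemma connect_adjE_subset S F : S \subset F -> subrel (connect (adj S)) (connect (adj F)).
Proof.
by move=> sSF; apply: connect_sub => x y Sxy; apply/connect1/(adjE_subset sSF).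
Qed.

Lemma adjE_setU1 e S x y : adj (e |: S) x y =
  ((src e == x) && (dst e == y) || (src e == y) && (dst e == x)) || adj S x y.
Proof.
apply/existsP/orP => [[f /andP[]]|].
  rewrite in_setU1 => /orP[/eqP-> H|fS H]; first by left.
  by right; apply/existsP; exists f; rewrite fS.
case=> [H|/existsP[f /andP[fS H]]]; first by exists e; rewrite setU11.
by exists f; rewrite in_setU1 fS orbT.
Qed.

Lemma adjE_dart S a : a.1 \in S -> adj S (dtail a) (dhead a).
Proof.
move=> aS; apply/existsP; exists a.1; rewrite aS /Defs.dtail /Defs.dhead.
by case: a.2; rewrite !eqxx ?orbT.
Qed.

Lemma connect_dart_path S a0 l : path darts_link a0 l -> {subset map fst l <= S} ->
  connect (adj S) (dhead a0) (dhead (last a0 l)).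
Proof.
elim: l a0 => //= b l IHl a0 /andP[/eqP a0b bl] lS.
apply: connect_trans (IHl b bl _); last by move=> x xl; apply: lS; rewrite inE xl orbT.
by rewrite a0b; apply/connect1/adjE_dart/lS/mem_head.
Qed.

Lemma dart_path_of_path S x p : path (adj S) x p -> uniq (x :: p) ->
  exists ds : seq (E * bool),
  [/\ {subset map fst ds <= S}, uniq (map fst ds), map dtail ds = belast x p,
      map dhead ds = p & forall a0, dhead a0 = x -> path darts_link a0 ds].
Proof.
elim: p x => [|y p IHp] x /=; first by exists [::].
move=> /andP[/existsP[f /andP[fS Hf]] yp] /andP[xNp up].
have [ds [dsS uds tl hd pds]] := IHp y yp up.
have [a [a1 atl ahd]] : exists a, [/\ a.1 = f, dtail a = x & dhead a = y].
  case/orP: Hf => /andP[/eqP s /eqP t]; [exists (f, true) | exists (f, false)];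
  by rewrite /Defs.dtail /Defs.dhead /= ?s ?t.
exists (a :: ds); split => /=.
- by move=> g; rewrite inE => /orP[/eqP->|/dsS //]; rewrite a1.
- rewrite uds andbT; apply/negP => /mapP[b bds fb].
  have : (src b.1 \in y :: p) && (dst b.1 \in y :: p).
    have t : dtail b \in y :: p by apply: mem_belast; rewrite -tl map_f.
    have h : dhead b \in y :: p by rewrite inE -hd map_f ?orbT.
    by move: t h; rewrite /Defs.dtail /Defs.dhead; case: b.2 => -> ->.
  rewrite -fb a1; case/orP: Hf => /andP[/eqP s /eqP t].
    by rewrite s (negbTE xNp).
  by rewrite t (negbTE xNp) andbF.
- by rewrite atl tl.
- by rewrite ahd hd.
- by move=> a0 h0; rewrite h0 atl eqxx /=; apply: pds.
Qed.

Lemma circle_closing_edge S e : e \notin S -> connect (adj S) (src e) (dst e) ->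
  exists ds : seq (E * bool),
  [/\ circle src dst (e |: S) ((e, true) :: ds), {subset map fst ds <= S},
      path darts_link (e, true) ds & dhead (last (e, true) ds) = src e].
Proof.
move=> eS; rewrite connect_adjE_sym => /connectP[p0 pp0 lp0].
case: (shortenP pp0) lp0 => p pp up _ lp.
have [ds [dsS uds tl hd /(_ (e, true) erefl) pds]] := dart_path_of_path pp up.
have lst : dhead (last (e, true) ds) = src e by rewrite -last_map hd /= lp.
exists ds; split => //; split.
- case: ds {dsS uds tl pds lst} hd => [|b ds] //= hd.
  by move: lp (loopless e); rewrite -hd /= => ->; rewrite eqxx.
- by rewrite /= uds andbT; apply: contra eS => /dsS.
- move=> g; rewrite inE => /orP[/eqP->|/dsS gS]; first exact: setU11.
  by rewrite in_setU1 gS orbT.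
- by rewrite /= tl /Defs.dtail /=; move: up; rewrite lastI rcons_uniq -lp.
- by rewrite /cycle rcons_path pds /= lst /Defs.dtail /=.
Qed.

Lemma forest_subset S F : forest F -> S \subset F -> forest S.
Proof.
move=> fF /subsetP sSF c [c1 c2 c3 c4 c5]; apply: (fF c); split => //.
by move=> x /c3 /sSF.
Qed.

Lemma forest_setU1 S e : forest S -> ~~ connect (adj S) (src e) (dst e) ->
  forest (e |: S).
Proof.
move=> fS nc c [c1 c2 c3 c4 c5].
have [ec|nec] := boolP (e \in map fst c); last first.
  apply: (fS c); split => // x xc; have := c3 x xc; rewrite in_setU1.
  by case/orP => // /eqP ex; rewrite -ex xc in nec.
case/mapP: ec => a ac ea; case: (rot_to ac) => i l rc.
have cyc : cycle darts_link (a :: l) by rewrite -rc rot_cycle.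
have ual : uniq (map fst (a :: l)) by rewrite -rc map_rot rot_uniq.
have lS : {subset map fst l <= S}.
  move=> x xl; have : x \in map fst c by rewrite -(mem_rot i) -map_rot rc inE xl orbT.
  move/c3; rewrite in_setU1 => /orP[/eqP xe|//].
  by move: ual => /= /andP[]; rewrite -ea -xe xl.
move: cyc; rewrite /cycle rcons_path => /andP[pl /eqP lst].
have := connect_dart_path pl lS; rewrite lst /Defs.dtail /Defs.dhead -ea.
by case: a.2 => H; move: nc; [rewrite connect_adjE_sym H | rewrite H].
Qed.

Lemma ncompE_set0 : ncomp set0 = n.
Proof.
rewrite /ncompE /n_comp_mem -[RHS]card_ord; apply: eq_card => x.
rewrite !inE andbT /roots; apply/eqP; rewrite /fingraph.root.
have cx y : connect (adj set0) x y -> y = x.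
  by case/connectP => -[|z p] //= /andP[/existsP[f]]; rewrite inE.
by case: pickP => [y /cx -> //|/(_ x)]; rewrite connect0.
Qed.

Lemma ncompE_setU1 S e :
  ncomp S = (ncomp (e |: S) + ~~ connect (adj S) (src e) (dst e))%N.
Proof.
set r := adj S; set r' := adj (e |: S); set u := src e; set v := dst e.
have symr := connect_adjE_sym S; have symr' := connect_adjE_sym (e |: S).
have sub : S \subset e |: S by exact: subsetUr.
set a := closure r (pred2 u v).
have ua : u \in a by apply: mem_closure; rewrite !inE eqxx.
have va : v \in a by apply: mem_closure; rewrite !inE eqxx orbT.
have clr : closed r a by exact: closure_closed.
have clr' : closed r' a.
  apply: intro_closed => // x y; rewrite /r' adjE_setU1 => /orP[|rxy].
    by case/orP => /andP[/eqP <- /eqP <-].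
  by rewrite (clr _ _ rxy).
have eqa : a =i closure r' (pred2 u v).
  move=> x; apply/idP/idP; case/pred0Pn => y /andP[/= cxy py].
    by apply/pred0Pn; exists y; rewrite /= py andbT; apply: connect_adjE_subset cxy.
  by rewrite (closed_connect clr' cxy); case/pred2P: py => ->.
have out x : x \notin a -> connect r x =1 connect r' x.
  move=> xa y; apply/idP/idP; first exact: connect_adjE_subset.
  case/connectP => p pp ->; apply/connectP; exists p => //.
  elim: p x xa pp => //= z p IHp x xa /andP[rxz pz].
  have rxz0 : r x z.
    move: rxz; rewrite /r' adjE_setU1 => /orP[|//].
    by case/orP => /andP[/eqP e1 /eqP e2]; rewrite -?e1 -?e2 ?ua ?va in xa.
  by rewrite rxz0 /=; apply: IHp pz; rewrite -(clr _ _ rxz0).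
rewrite /ncompE !(@eq_n_comp_r _ _ predT 'I_n) // (n_compC a r) (n_compC a r').
rewrite (n_comp_closure2 symr u v) (eq_n_comp_r eqa) (n_comp_closure2 symr').
have -> : n_comp r [predC a] = n_comp r' [predC a].
  apply: eq_card => x; rewrite !inE; case xa: (x \in a); rewrite ?andbF //=.
  by rewrite /roots /fingraph.root (eq_pick (out x (negbT xa))).
have -> : connect r' u v by apply: connect1; rewrite /r' adjE_setU1 !eqxx.
by case: (connect r u v) => /=; lia.
Qed.

Lemma forest_card S : forest S -> (ncomp S + #|S| = n)%N.
Proof.
elim/finset_ind: S => [|e S eS IHS] fS; first by rewrite cards0 ncompE_set0 addn0.
have fS' : forest S := forest_subset fS (subsetUr _ _).
have nc : ~~ connect (adj S) (src e) (dst e).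
  by apply/negP => /(circle_closing_edge eS)[ds [ci _ _ _]]; apply: fS ci.
by move: (IHS fS'); rewrite (ncompE_setU1 S e) nc cardsU1 eS; lia.
Qed.

Lemma spanning_forest F : exists S, [/\ S \subset F, forest S &
  connect (adj S) =2 connect (adj F)].
Proof.
elim/finset_ind: F => [|e F eF [S [sSF fS cSF]]].
  by exists set0; split => // c [c1 _ c3 _ _]; case: c c1 c3 => // a c _ /(_ a.1 (mem_head _ _)); rewrite inE.
have sFeF : F \subset e |: F := subsetUr _ _.
have [c|nc] := boolP (connect (adj S) (src e) (dst e)).
  exists S; split => //; first exact: subset_trans sFeF.
  move=> x y; apply/idP/idP; first exact/connect_adjE_subset/(subset_trans sSF).
  apply: connect_sub x y => x y; rewrite adjE_setU1 => /orP[|/connect1]; last by rewrite cSF.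
  by case/orP => /andP[/eqP <- /eqP <-]; rewrite // connect_adjE_sym.
exists (e |: S); split; [exact: setUS | exact: forest_setU1 |].
move=> x y; apply/idP/idP; first exact/connect_adjE_subset/setUS.
apply: connect_sub x y => x y; rewrite adjE_setU1 => /orP[H|].
  by apply: connect1; rewrite adjE_setU1 H.
by move=> /connect1; rewrite -cSF; apply/connect_adjE_subset/subsetUr.
Qed.

Lemma spanning_forest_card F : exists S, [/\ S \subset F, forest S,
  connect (adj S) =2 connect (adj F) & #|S| = rankE src dst F].
Proof.
have [S [sSF fS cSF]] := spanning_forest F; exists S; split => //.
by move: (forest_card fS); rewrite /rankE /ncompE (eq_n_comp cSF); lia.
Qed.
End Graph.

Section Hyperplanes.
Variables (R : realType) (n d : nat) (E : finType)
          (src dst : E -> 'I_n) (phi : E -> R) (Q : 'I_n -> 'rV[R]_d).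
Hypothesis loopless : forall e, src e != dst e.

Implicit Types (S F : {set E}) (e : E) (a : E * bool) (P : 'rV[R]_d).
Local Notation adj := (adjE src dst).
Local Notation dtail := (dtail src dst).
Local Notation dhead := (dhead src dst).
Local Notation dgain := (dgain phi).
Local Notation hyp := (hyp src dst phi Q).
Local Notation inter := (inter src dst phi Q).
Local Notation balanced := (balanced src dst phi).
Local Notation darts_link := (fun a b : E * bool => dhead a == dtail b).

Lemma balanced_subset S F : S \subset F -> balanced F -> balanced S.
Proof.
by move=> /subsetP sSF bF c [c1 c2 cS c4 c5]; apply: bF; split => // x /cS /sSF.
Qed.

Lemma dgain_hyp P a :
  hyp a.1 P -> dgain a = sqdist P (Q (dtail a)) - sqdist P (Q (dhead a)).
Proof.
by rewrite /hyp /psi /Defs.dgain /Defs.dtail /Defs.dhead; case: a => e [] /= <-; rewrite ?opprB.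
Qed.

Lemma sum_dgain_path P a0 l : path darts_link a0 l -> (forall b, b \in l -> hyp b.1 P) ->
  \sum_(b <- l) dgain b = sqdist P (Q (dhead a0)) - sqdist P (Q (dhead (last a0 l))).
Proof.
elim: l a0 => [|b l IHl] a0 /=; first by rewrite big_nil subrr.
move=> /andP[/eqP a0b bl] lP; rewrite big_cons (IHl b bl); last first.
  by move=> x xl; apply: lP; rewrite inE xl orbT.
by rewrite (@dgain_hyp P) ?a0b ?addrA ?subrK //; apply/lP/mem_head.
Qed.

Lemma balanced_of_inter S P : inter S P -> balanced S.
Proof.
move=> SP [|a l] [_ _ lS _ cyc] //.
rewrite -(perm_big _ (permEl (perm_rcons a l))) (@sum_dgain_path P _ _ cyc) ?last_rcons ?subrr //.
by move=> b; rewrite mem_rcons => bl; apply/SP/lS/map_f.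
Qed.

Lemma hyp_closing_edge S e P : e \notin S -> connect (adj S) (src e) (dst e) ->
  inter S P -> balanced (e |: S) -> hyp e P.
Proof.
move=> eS cSe SP bal.
have [ds [ci dsS pds lst]] := circle_closing_edge loopless eS cSe.
move: (bal _ ci); rewrite big_cons (@sum_dgain_path P _ _ pds); last first.
  by move=> b bds; apply/SP/dsS/map_f.
by rewrite lst /hyp /psi /Defs.dgain /= => /eqP; rewrite addrA subr_eq0 => /eqP <-; ring.
Qed.

Lemma inter_spanning_forest S F P : balanced F -> S \subset F ->
  connect (adj S) =2 connect (adj F) -> inter S P -> inter F P.
Proof.
move=> bF sSF cSF SP e eF; have [eS|eS] := boolP (e \in S); first exact: SP.
apply: (hyp_closing_edge eS _ SP).
  by rewrite cSF; apply/connect1/existsP; exists e; rewrite eF !eqxx.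
by apply: balanced_subset bF; rewrite subUset sub1set eF sSF.
Qed.

Definition rdot (X Y : 'rV[R]_d) : R := \sum_k X 0 k * Y 0 k.

Lemma psi_affine i j P :
  psi Q i j P = 2 * rdot P (Q j - Q i) + rdot (Q i) (Q i) - rdot (Q j) (Q j).
Proof.
rewrite /psi /sqdist /rdot mulr_sumr -big_split -!sumrB /=.
by apply: eq_bigr => k _; rewrite !mxE; ring.
Qed.

Definition upair e : 'I_n * 'I_n :=
  if (src e < dst e)%N then (src e, dst e) else (dst e, src e).

Lemma upair_lt e : ((upair e).1 < (upair e).2)%N.
Proof.
rewrite /upair; case: (ltnP (src e) (dst e)) => //= le_ds.
by rewrite ltn_neqAle le_ds andbT; apply: contra (loopless e) => /eqP/val_inj->.
Qed.

Lemma ncompT_upair S : ncompT [set upair e | e in S] = ncompE src dst S.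
Proof.
have upairE e i j : (upair e == (i, j)) || (upair e == (j, i)) =
    (src e == i) && (dst e == j) || (src e == j) && (dst e == i).
  rewrite /upair; case: ifP => _; rewrite !xpair_eqE //.
  by case: (src e == i); case: (dst e == j); case: (src e == j); case: (dst e == i).
apply: eq_n_comp; apply: eq_connect => i j; apply/idP/existsP.
  by case/orP => /imsetP[e eS /esym/eqP ep]; exists e; rewrite eS -upairE ep ?orbT.
case=> e /andP[eS]; rewrite -upairE => /orP[] /eqP ep; apply/orP; [left | right];
  by apply/imsetP; exists e.
Qed.

Definition edge_dirmx S : 'M[R]_(#|S|, d) :=
  \matrix_(i, j) (Q (dst (enum_val i)) - Q (src (enum_val i))) 0 j.

Lemma row_edge_dirmx S e (eS : e \in S) :
  row (enum_rank_in eS e) (edge_dirmx S) = Q (dst e) - Q (src e).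
Proof. by apply/rowP => j; rewrite !mxE enum_rankK_in. Qed.

Lemma rank_edge_dirmx S : ideal_general_position Q -> forest src dst S ->
  (#|S| <= d)%N -> \rank (edge_dirmx S) = #|S|.
Proof.
move=> [_ igp] fS Sd; apply/eqP; rewrite eqn_leq rank_leq_row /=.
have Tlt p : p \in [set upair e | e in S] -> (p.1 < p.2)%N.
  by case/imsetP => e _ ->; apply: upair_lt.
have := igp _ Tlt; rewrite ncompT_upair.
have -> : (n - ncompE src dst S = #|S|)%N by move: (forest_card loopless fS); lia.
move/minn_idPl: Sd => -> rk; rewrite -{1}rk; apply: mxrankS; apply/sumsmx_subP => _ /imsetP[e eS ->].
rewrite genmxE /upair; case: ifP => _ /=; last rewrite -opprB eqmx_opp;
  by rewrite -(row_edge_dirmx eS) row_sub.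
Qed.

Lemma forest_hyp_solvable S (t : E -> R) : ideal_general_position Q ->
  forest src dst S -> (#|S| <= d)%N ->
  exists P, forall e, e \in S -> psi Q (src e) (dst e) P = t e.
Proof.
move=> igp fS Sd.
have full : row_full (edge_dirmx S)^T by rewrite /row_full mxrank_tr rank_edge_dirmx.
pose tS : 'rV[R]_#|S| := \row_i ((t (enum_val i) + rdot (Q (dst (enum_val i))) (Q (dst (enum_val i)))
   - rdot (Q (src (enum_val i))) (Q (src (enum_val i)))) / 2).
have /submxP[P tSP] := submx_full tS full.
exists P => e eS; rewrite psi_affine.
have := congr1 (fun v : 'rV_#|S| => v 0 (enum_rank_in eS e)) tSP.
rewrite !mxE enum_rankK_in // => tSe.
have -> : rdot P (Q (dst e) - Q (src e)) =
    (t e + rdot (Q (dst e)) (Q (dst e)) - rdot (Q (src e)) (Q (src e))) / 2.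
  by rewrite tSe; apply: eq_bigr => k _; rewrite !mxE enum_rankK_in.
by field.
Qed.
End Hyperplanes.

Section GeneralPosition.
Variables (R : realType) (n d : nat) (E : finType)
          (src dst : E -> 'I_n) (phi : E -> R) (Q : 'I_n -> 'rV[R]_d).
Hypothesis loopless : forall e, src e != dst e.
Hypothesis igp : ideal_general_position Q.
Hypothesis no_forest_point : forall S : {set E}, forest src dst S -> #|S| = d.+1 ->
  ~ (exists P, inter src dst phi Q S P).

Implicit Types (S F : {set E}) (e : E) (P : 'rV[R]_d) (s t : 'rV[R]_d -> Prop).
Local Notation adj := (adjE src dst).
Local Notation forest := (forest src dst).
Local Notation hyp := (hyp src dst phi Q).
Local Notation inter := (inter src dst phi Q).
Local Notation balanced := (balanced src dst phi).
Local Notation Eof := (Eof src dst phi Q).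

Lemma in_Eof s e : e \in Eof s <-> (forall P, s P -> hyp e P).
Proof. by rewrite inE; split => [/asboolP|/asboolP]. Qed.

Lemma inter_Eof s P : s P -> inter (Eof s) P.
Proof. by move=> sP e /in_Eof; apply. Qed.

Lemma Eof_balanced_flat s : (exists P, s P) -> balanced_flat src dst phi (Eof s).
Proof.
move=> [P sP]; split; first exact: balanced_of_inter (inter_Eof sP).
move=> e eF cF bal; apply: (negP eF); apply/in_Eof => P' sP'.
by apply: (hyp_closing_edge loopless eF cF _ bal); apply: inter_Eof.
Qed.

Lemma rankE_Eof s : (exists P, s P) -> (rankE src dst (Eof s) <= d)%N.
Proof.
move=> [P sP]; have [S [sSF fS _ <-]] := spanning_forest_card loopless (Eof s).
rewrite leqNgt; apply/negP => /exists_subset_card[S' [sS'S cardS']].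
apply: no_forest_point (forest_subset fS sS'S) cardS' _; exists P.
by move=> e /(subsetP sS'S)/(subsetP sSF)/in_Eof; apply.
Qed.

Lemma exists_inter_rank_le F : balanced F -> (rankE src dst F <= d)%N ->
  exists P, inter F P.
Proof.
move=> bF rF; have [S [sSF fS cSF cardS]] := spanning_forest_card loopless F.
have Sd : (#|S| <= d)%N by rewrite cardS.
have [P SP] := forest_hyp_solvable loopless phi igp fS Sd.
by exists P; apply: (inter_spanning_forest loopless bF sSF cSF) => e /SP.
Qed.

Lemma forced_hyp_connect F e : balanced F -> (rankE src dst F <= d)%N ->
  e \notin F -> (forall P, inter F P -> hyp e P) -> connect (adj F) (src e) (dst e).
Proof.
move=> bF rF eF he; apply/negPn/negP => nc.
have [P0 FP0] := exists_inter_rank_le bF rF.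
have [S [sSF fS cSF cardS]] := spanning_forest_card loopless F.
have eS : e \notin S by apply: contra eF; apply: (subsetP sSF).
have fSe : forest (e |: S) by apply: forest_setU1 fS _; rewrite cSF.
have cardSe : #|e |: S| = #|S|.+1 by rewrite cardsU1 eS.
have inter_SF P : inter S P -> inter F P := inter_spanning_forest loopless bF sSF cSF.
move: rF; rewrite -cardS leq_eqVlt => /orP[/eqP eqSd | ltSd].
  have cardSe1 : #|e |: S| = d.+1 by rewrite cardSe eqSd.
  apply: (no_forest_point fSe cardSe1).
  by exists P0 => g; rewrite in_setU1 => /orP[/eqP-> | /(subsetP sSF)/FP0]; [apply: he |].
pose t g := if g == e then phi e + 1 else phi g.
have Sed : (#|e |: S| <= d)%N by rewrite cardSe.
have [P SeP] := forest_hyp_solvable loopless t igp fSe Sed.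
have : hyp e P.
  apply/he/inter_SF => g gS; rewrite /hyp SeP ?in_setU1 ?gS ?orbT // /t.
  by case: eqP => // ge; move: eS; rewrite -ge gS.
by rewrite /hyp SeP ?setU11 // /t eqxx => /eqP; rewrite -subr_eq0 addrC addKr oner_eq0.
Qed.

Lemma Eof_inter_flat F : balanced_flat src dst phi F -> (rankE src dst F <= d)%N ->
  Eof (inter F) = F.
Proof.
move=> [bF flatF] rF; apply/setP => e; apply/idP/idP; last first.
  by move=> eF; apply/in_Eof => P; apply.
move/in_Eof => he; apply/negPn/negP => eF.
have [P FP] := exists_inter_rank_le bF rF.
apply: (flatF e eF (forced_hyp_connect bF rF eF he)).
apply: (@balanced_of_inter _ _ _ _ _ _ _ Q _ P) => g.
by rewrite in_setU1 => /orP[/eqP-> | /FP]; [apply: he |].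
Qed.

Lemma inL_subset_Eof s t : inL src dst phi Q s ->
  (forall P, t P -> s P) <-> Eof s \subset Eof t.
Proof.
move=> [_ [A sA]]; split.
  by move=> ts; apply/subsetP => e /in_Eof he; apply/in_Eof => P /ts /he.
move=> /subsetP sEst P tP; apply/sA => e eA.
have /sEst/in_Eof : e \in Eof s by apply/in_Eof => P' /sA; apply.
by apply.
Qed.
End GeneralPosition.

Theorem proposition6p2 (R : realType) (n d : nat) (E : finType)
    (src dst : E -> 'I_n) (phi : E -> R) (Q : 'I_n -> 'rV[R]_d) :
  (forall e, src e != dst e) ->
  ideal_general_position Q ->
  (forall S : {set E}, forest src dst S -> #|S| = d.+1 ->
     ~ (exists P, inter src dst phi Q S P)) ->
  general_position src dst phi Q.
Proof.
move=> loopless igp no_forest_point; split.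
- move=> s [s_ne _]; split; first exact: (Eof_balanced_flat _ _ loopless s_ne).
  exact: (rankE_Eof loopless no_forest_point s_ne).
- move=> F flatF rF; have [P FP] := exists_inter_rank_le loopless igp flatF.1 rF.
  exists (inter src dst phi Q F); split; first by split; [exists P | exists F].
  exact: (Eof_inter_flat loopless igp no_forest_point flatF rF).
- by move=> s t sL _; apply: inL_subset_Eof.
Qed.
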